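(* Let $A_1,\dots,A_m\in\mathbb{S}^n$, $b\in\mathbb{R}^m$, $C\in\mathbb{S}^n$. Let $X\in\mathcal{C}$ be a global optimum of (SDP) and assume strong duality holds, i.e., the dual problem $\max_{\nu\in\mathbb{R}^m}\langle b,\nu\rangle$ subject to $C-\mathcal{A}^*(\nu)\succeq0$ has an optimal solution $\nu$ with $\langle b,\nu\rangle=\langle C,X\rangle$. Let Assumption 1(a) hold with $p=\operatorname{rank}(X)$. Then, writing $X=YY^\top$ with $Y\in\mathbb{R}^{n\times p}$ and $S=S(Y)$, we have $S\succeq0$ and $\langle S,X\rangle=0$.
   Context: $\mathbb{S}^n$: real symmetric $n\times n$ matrices; $\langle U,V\rangle=\operatorname{tr}(U^\top V)$. $\mathcal{A}(X)_i=\langle A_i,X\rangle$, $\mathcal{A}^*(\nu)=\sum_i\nu_iA_i$. $\mathcal{C}=\{X\in\mathbb{S}^n:\mathcal{A}(X)=b,\ X\succeq0\}$; (SDP): minimize $\langle C,X\rangle$ over $\mathcal{C}$. $\mathcal{M}_p=\{Y\in\mathbb{R}^{n\times p}:\mathcal{A}(YY^\top)=b\}$. Assumption 1(a) for $p$: $A_1Y,\dots,A_mY$ are linearly independent in $\mathbb{R}^{n\times p}$ for all $Y\in\mathcal{M}_p$. For $Y\in\mathcal{M}_p$: $G_{ij}=\langle A_iY,A_jY\rangle$, $\mu=G^\dagger\mathcal{A}(CYY^\top)$ (Moore–Penrose pseudo-inverse), and $S(Y)=C-\mathcal{A}^*(\mu)$; this depends on $Y$ only through $YY^\top$. *)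

From HB Require Import structures.
From mathcomp Require Import all_boot all_order all_algebra.
From mathcomp Require Import reals.
Set Implicit Arguments. Unset Strict Implicit. Unset Printing Implicit Defensive.
Import Order.TTheory GRing.Theory Num.Theory.
Local Open Scope ring_scope.

Section Defs.
Variable R : realType.

Definition frob {n k : nat} (U V : 'M[R]_(n, k)) : R := \tr (U^T *m V).

Definition symmx {n : nat} (M : 'M[R]_n) : Prop := M^T = M.

Definition psd {n : nat} (M : 'M[R]_n) : Prop :=
  symmx M /\ forall v : 'cV[R]_n, 0 <= (v^T *m M *m v) 0 0.

Definition Aop {n m : nat} (A : 'I_m -> 'M[R]_n) (X : 'M[R]_n) : 'cV[R]_m :=
  \col_i frob (A i) X.

Definition Aadj {n m : nat} (A : 'I_m -> 'M[R]_n) (nu : 'cV[R]_m) : 'M[R]_n :=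
  \sum_i nu i 0 *: A i.

Definition sdp_feasible {n m : nat} (A : 'I_m -> 'M[R]_n) (b : 'cV[R]_m)
  (X : 'M[R]_n) : Prop := Aop A X = b /\ psd X.

Definition sdp_optimal {n m : nat} (A : 'I_m -> 'M[R]_n) (b : 'cV[R]_m)
  (C X : 'M[R]_n) : Prop :=
  sdp_feasible A b X /\
  forall X' : 'M[R]_n, sdp_feasible A b X' -> frob C X <= frob C X'.

Definition dual_feasible {n m : nat} (A : 'I_m -> 'M[R]_n) (C : 'M[R]_n)
  (nu : 'cV[R]_m) : Prop := psd (C - Aadj A nu).

Definition dual_optimal {n m : nat} (A : 'I_m -> 'M[R]_n) (b : 'cV[R]_m)
  (C : 'M[R]_n) (nu : 'cV[R]_m) : Prop :=
  dual_feasible A C nu /\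
  forall nu' : 'cV[R]_m, dual_feasible A C nu' -> frob b nu' <= frob b nu.

Definition inMp {n m p : nat} (A : 'I_m -> 'M[R]_n) (b : 'cV[R]_m)
  (Y : 'M[R]_(n, p)) : Prop := Aop A (Y *m Y^T) = b.

Definition assumption1a {n m : nat} (A : 'I_m -> 'M[R]_n) (b : 'cV[R]_m)
  (p : nat) : Prop :=
  forall Y : 'M[R]_(n, p), inMp A b Y ->
    forall c : 'I_m -> R, \sum_i c i *: (A i *m Y) = 0 -> forall i, c i = 0.

Definition gram {n m p : nat} (A : 'I_m -> 'M[R]_n) (Y : 'M[R]_(n, p))
  : 'M[R]_m := \matrix_(i, j) frob (A i *m Y) (A j *m Y).

Definition is_MP_pinv {m : nat} (G Gp : 'M[R]_m) : Prop :=
  [/\ G *m Gp *m G = G, Gp *m G *m Gp = Gp,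
      (G *m Gp)^T = G *m Gp & (Gp *m G)^T = Gp *m G].

Definition Smat {n m p : nat} (A : 'I_m -> 'M[R]_n) (C : 'M[R]_n)
  (Y : 'M[R]_(n, p)) (Gp : 'M[R]_m) : 'M[R]_n :=
  C - Aadj A (Gp *m Aop A (C *m (Y *m Y^T))).

End Defs.

From mathcomp Require Import all_boot all_order all_algebra.
From mathcomp Require Import reals.
From mathcomp Require Import ring lra.

(* Strong duality gives complementary slackness <C - A^*(nu), X> = 0 for a dual
   optimum nu.  Since C - A^*(nu) is PSD and X = Y Y^T, this forces
   (C - A^*(nu)) Y = 0, hence A(C Y Y^T) = A(A^*(nu) Y Y^T) = G nu for the Gram
   matrix G of the A_i Y.  Assumption 1(a) makes G injective, because
   w^T G w = |sum_i w_i A_i Y|^2; so any G^+ with G G^+ G = G gives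
   mu = G^+ G nu = nu, and S(Y) is the dual slack matrix C - A^*(nu). *)

Set Implicit Arguments.
Unset Strict Implicit.
Unset Printing Implicit Defensive.
Import Order.TTheory GRing.Theory Num.Theory.
Local Open Scope ring_scope.

Lemma quadratic_ge0_linear_coef_eq0 (R : realFieldType) (a c : R) :
  (forall t, 0 <= t * a + t ^+ 2 * c) -> a = 0.
Proof.
move=> hq; set d := `|c| + 1.
have d_gt0 : 0 < d by rewrite ltr_pwDr.
have c_le : c <= d - 1 by rewrite /d addrK ler_norm.
have := hq (- a / d); set t := - a / d => ht.
have td : t * d = - a by rewrite /t mulfVK // gt_eqF.
have scaled : d ^+ 2 * (t * a + t ^+ 2 * c) = a ^+ 2 * (c - d).
  by transitivity ((t * d) * (a * d) + (t * d) ^+ 2 * c); [ring | rewrite td; ring].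
have : 0 <= a ^+ 2 * (c - d) by rewrite -scaled mulr_ge0 ?sqr_ge0.
nra.
Qed.

Lemma mulmx_ginvK (R : pzRingType) (m k : nat) (G Gp : 'M[R]_m) (w : 'M[R]_(m, k)) :
  (forall v : 'M[R]_(m, k), G *m v = 0 -> v = 0) ->
  G *m Gp *m G = G -> Gp *m (G *m w) = w.
Proof.
move=> G_inj GGpG; apply/eqP; rewrite -subr_eq0; apply/eqP/G_inj.
by rewrite mulmxBr !mulmxA GGpG subrr.
Qed.

Section Frobenius.
Variable R : realType.

Lemma frobC n k (U V : 'M[R]_(n, k)) : frob U V = frob V U.
Proof. by rewrite /frob -mxtrace_tr trmx_mul trmxK. Qed.

Lemma frobDr n k (U V W : 'M[R]_(n, k)) : frob U (V + W) = frob U V + frob U W.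
Proof. by rewrite /frob mulmxDr mxtraceD. Qed.

Lemma frobZr n k (a : R) (U V : 'M[R]_(n, k)) : frob U (a *: V) = a * frob U V.
Proof. by rewrite /frob -scalemxAr mxtraceZ. Qed.

Lemma frobDl n k (U V W : 'M[R]_(n, k)) : frob (U + V) W = frob U W + frob V W.
Proof. by rewrite frobC frobDr ![frob W _]frobC. Qed.

Lemma frobZl n k (a : R) (U V : 'M[R]_(n, k)) : frob (a *: U) V = a * frob U V.
Proof. by rewrite frobC frobZr frobC. Qed.

Lemma frobBl n k (U V W : 'M[R]_(n, k)) : frob (U - V) W = frob U W - frob V W.
Proof. by rewrite /frob linearB /= mulmxBl raddfB. Qed.

Lemma frob_suml n k (I : finType) (c : I -> R) (U : I -> 'M[R]_(n, k)) V :
  frob (\sum_i c i *: U i) V = \sum_i c i * frob (U i) V.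
Proof.
rewrite frobC /frob mulmx_sumr raddf_sum /=; apply: eq_bigr => i _.
by rewrite -scalemxAr mxtraceZ -/(frob _ _) frobC.
Qed.

Lemma frob_mulmxl n k (S : 'M[R]_n) (U V : 'M[R]_(n, k)) :
  frob (S *m U) V = frob U (S^T *m V).
Proof. by rewrite /frob trmx_mul mulmxA. Qed.

Lemma frob_mul_trmxr n k l (U : 'M[R]_(n, k)) (V : 'M[R]_(n, l)) (W : 'M[R]_(k, l)) :
  frob U (V *m W^T) = frob (U *m W) V.
Proof. by rewrite /frob mulmxA mxtrace_mulC trmx_mul !mulmxA. Qed.

Lemma frob_selfE n k (U : 'M[R]_(n, k)) : frob U U = \sum_j \sum_i U i j ^+ 2.
Proof.
rewrite /frob /mxtrace; apply: eq_bigr => j _; rewrite mxE.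
by apply: eq_bigr => i _; rewrite mxE expr2.
Qed.

Lemma frob_self_eq0 n k (U : 'M[R]_(n, k)) : frob U U = 0 -> U = 0.
Proof.
rewrite frob_selfE => UU0; apply/matrixP => i j; rewrite mxE.
have col_ge0 j' : 0 <= \sum_i U i j' ^+ 2 by apply: sumr_ge0 => *; apply: sqr_ge0.
have col0 := psumr_eq0P (fun j' _ => col_ge0 j') UU0 (i := j) isT.
have := psumr_eq0P (fun i' _ => sqr_ge0 (U i' j)) col0 (i := i) isT.
by move/eqP; rewrite sqrf_eq0 => /eqP.
Qed.

Lemma frob_cols n k (U V : 'M[R]_(n, k)) :
  frob U V = \sum_j frob (col j U) (col j V).
Proof.
rewrite /frob /mxtrace; apply: eq_bigr => j _.
by rewrite big_ord1 !mxE; apply: eq_bigr => i _; rewrite !mxE.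
Qed.

End Frobenius.

Section Semidefinite.
Variable R : realType.

Lemma psd_frob_ge0 n k (S : 'M[R]_n) (W : 'M[R]_(n, k)) :
  psd S -> 0 <= frob W (S *m W).
Proof.
move=> [_ S_ge0]; rewrite frob_cols; apply: sumr_ge0 => j _.
by rewrite [col j (S *m W)]colE -mulmxA -colE /frob /mxtrace big_ord1 mulmxA S_ge0.
Qed.

Lemma psd_frob_eq0 n k (S : 'M[R]_n) (W : 'M[R]_(n, k)) :
  psd S -> frob W (S *m W) = 0 -> S *m W = 0.
Proof.
move=> S_psd WSW0; have [S_sym _] := S_psd; set U := S *m W.
(* Perturbing W along U, the quadratic in t stays nonnegative, so its linear
   coefficient 2 <U, U> vanishes. *)
have cross : frob W (S *m U) = frob U U by rewrite frobC frob_mulmxl S_sym.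
have expand t : frob (W + t *: U) (S *m (W + t *: U))
    = t * (2 * frob U U) + t ^+ 2 * frob U (S *m U).
  by rewrite mulmxDr -scalemxAr frobDl !frobDr !frobZl !frobZr cross WSW0; ring.
have UU0 : 2 * frob U U = 0.
  apply: (quadratic_ge0_linear_coef_eq0 (c := frob U (S *m U))) => t.
  by rewrite -expand psd_frob_ge0.
by apply: frob_self_eq0; lra.
Qed.

Lemma psd_frob_outer_eq0 n k (S : 'M[R]_n) (Y : 'M[R]_(n, k)) :
  psd S -> frob S (Y *m Y^T) = 0 -> S *m Y = 0.
Proof. by rewrite frob_mul_trmxr frobC; apply: psd_frob_eq0. Qed.

End Semidefinite.

Section Constraints.
Variables (R : realType) (n m : nat) (A : 'I_m -> 'M[R]_n).

Lemma frob_Aadj (nu : 'cV[R]_m) (X : 'M[R]_n) :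
  frob (Aadj A nu) X = frob nu (Aop A X).
Proof.
rewrite /Aadj frob_suml [RHS]/frob /mxtrace big_ord1 mxE.
by apply: eq_bigr => i _; rewrite !mxE.
Qed.

Lemma frob_dual_slack (b nu : 'cV[R]_m) (C X : 'M[R]_n) :
  Aop A X = b -> frob (C - Aadj A nu) X = frob C X - frob b nu.
Proof. by move=> AX; rewrite frobBl frob_Aadj AX [frob nu b]frobC. Qed.

Lemma Aadj_mulmx p (nu : 'cV[R]_m) (Y : 'M[R]_(n, p)) :
  Aadj A nu *m Y = \sum_i nu i 0 *: (A i *m Y).
Proof. by rewrite /Aadj mulmx_suml; apply: eq_bigr => i _; rewrite scalemxAl. Qed.

Lemma Aop_Aadj_outer p (w : 'cV[R]_m) (Y : 'M[R]_(n, p)) :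
  Aop A (Aadj A w *m Y *m Y^T) = gram A Y *m w.
Proof.
apply/matrixP => i j; rewrite ord1 !mxE frob_mul_trmxr Aadj_mulmx frobC frob_suml.
by apply: eq_bigr => k _; rewrite mxE mulrC frobC.
Qed.

Lemma gram_quadE p (w : 'cV[R]_m) (Y : 'M[R]_(n, p)) :
  frob w (gram A Y *m w) = frob (Aadj A w *m Y) (Aadj A w *m Y).
Proof. by rewrite -Aop_Aadj_outer -frob_Aadj frob_mul_trmxr. Qed.

Lemma gram_inj (b : 'cV[R]_m) p (Y : 'M[R]_(n, p)) (w : 'cV[R]_m) :
  assumption1a A b p -> inMp A b Y -> gram A Y *m w = 0 -> w = 0.
Proof.
move=> A1a Yin Gw0.
have : Aadj A w *m Y = 0.
  by apply: frob_self_eq0; rewrite -gram_quadE Gw0 /frob mulmx0 mxtrace0.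
rewrite Aadj_mulmx => /(A1a Y Yin) w0.
by apply/matrixP => i j; rewrite ord1 mxE w0.
Qed.

End Constraints.

Theorem proposition6 (R : realType) (n m : nat)
  (A : 'I_m -> 'M[R]_n) (b : 'cV[R]_m) (C X : 'M[R]_n) :
  (forall i, symmx (A i)) -> symmx C ->
  sdp_optimal A b C X ->
  (exists nu : 'cV[R]_m, dual_optimal A b C nu /\ frob b nu = frob C X) ->
  assumption1a A b (\rank X) ->
  forall (Y : 'M[R]_(n, \rank X)) (Gp : 'M[R]_m),
    X = Y *m Y^T ->
    is_MP_pinv (gram A Y) Gp ->
    psd (Smat A C Y Gp) /\ frob (Smat A C Y Gp) X = 0.
Proof.
move=> _ _ [[AX_b _] _] [nu [[S0_psd _] no_gap]] A1a Y Gp XE [GGpG _ _ _].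
have Yin : inMp A b Y by rewrite /inMp -XE.
have slack : frob (C - Aadj A nu) X = 0.
  by rewrite (frob_dual_slack nu C AX_b) no_gap subrr.
have S0Y : (C - Aadj A nu) *m Y = 0.
  by apply: (psd_frob_outer_eq0 S0_psd); rewrite -XE.
have CY : C *m Y = Aadj A nu *m Y by apply/eqP; rewrite -subr_eq0 -mulmxBl S0Y.
have G_inj (w : 'cV_m) : gram A Y *m w = 0 -> w = 0 by exact: gram_inj A1a Yin.
have mu_nu : Gp *m Aop A (C *m (Y *m Y^T)) = nu.
  by rewrite mulmxA CY Aop_Aadj_outer (mulmx_ginvK _ G_inj GGpG).
by rewrite /Smat mu_nu; split.
Qed.
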